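(* Let $d\ge 2$. For every $M>0$ there is an instance $I$ of the $1$-median problem in $\mathbb{R}^d$ (with four stationary objects) such that $\mathrm{OPT}(I)\ge M$.
   Context: Setting. There are $n\ge 2$ objects in $\mathbb{R}^d$; object $i$ follows a trajectory $p_i:[0,\infty)\to\mathbb{R}^d$ with $|p_i(t)-p_i(s)|\le v|t-s|$ for all $s,t$, where $v>0$ is a known speed bound. The initial positions $p_i(0)$ are known. A query strategy queries one object at each time $t=1,2,3,\dots$; querying object $i$ at time $t$ reveals $p_i(t)$. For $t\ge 0$ let $\tau_i(t)$ be the last time $\le t$ at which object $i$ was queried (or $0$ if never). The uncertainty region of object $i$ at time $t$ is the closed ball $U_i(t)$ of radius $v(t-\tau_i(t))$ centered at $p_i(\tau_i(t))$. For a center function $f$ mapping an $n$-tuple of points to a point, the uncertainty region of the center at time $t$ is $\{f(q_1,\dots,q_n): q_i\in U_i(t)\}$. The size of a set is its diameter. The measure of a strategy on an instance is the supremum over $t\in\{1,2,\dots\}$ of the size of the center's uncertainty region at time $t$ (just after the query at time $t$). The optimal measure $\mathrm{OPT}(I)$ of an instance $I$ is the infimum of the measure over all query sequences, which may be chosen with full knowledge of the trajectories. The center function is the Euclidean $1$-median: a point minimizing $\sum_i |x-q_i|$ over $x\in\mathbb{R}^d$; it is unique unless the points are collinear and $n$ is even, in which case by convention it is the midpoint of the two middle points along the line. *)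

From HB Require Import structures.
From mathcomp Require Import all_boot all_order all_algebra.
From mathcomp Require Import all_classical all_reals all_analysis.

Set Implicit Arguments.
Unset Strict Implicit.
Unset Printing Implicit Defensive.

Import Order.TTheory GRing.Theory Num.Theory.
Local Open Scope ring_scope.
Local Open Scope classical_set_scope.

Section Defs.
Variable R : realType.
Variable d : nat.

Definition Rpt := 'rV[R]_d.

Definition enorm (x : Rpt) : R := Num.sqrt (\sum_(i < d) (x ord0 i) ^+ 2).
Definition edist (x y : Rpt) : R := enorm (x - y).

(* Trajectories of n objects, defined on [0, oo). *)
Definition speed_bounded (n : nat) (v : R) (p : 'I_n -> R -> Rpt) : Prop :=
  forall i s t, 0 <= s -> 0 <= t -> edist (p i t) (p i s) <= v * `|t - s|.

Definition stationary (n : nat) (p : 'I_n -> R -> Rpt) : Prop :=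
  forall i t, 0 <= t -> p i t = p i 0.

(* A query strategy: sigma t is the object queried at time t (t = 1,2,...;
   sigma 0 is irrelevant). *)
(* last time <= t (and >= 1) at which object i was queried, or 0 *)
Fixpoint last_query (n : nat) (sigma : nat -> 'I_n) (i : 'I_n) (t : nat) : nat :=
  match t with
  | 0 => 0
  | t'.+1 => if sigma t'.+1 == i then t'.+1 else last_query sigma i t'
  end.

Definition closed_ball_e (c : Rpt) (r : R) : set Rpt :=
  [set q | edist q c <= r].

Definition uncertainty (n : nat) (v : R) (p : 'I_n -> R -> Rpt)
    (sigma : nat -> 'I_n) (i : 'I_n) (t : nat) : set Rpt :=
  let tau := last_query sigma i t in
  closed_ball_e (p i tau%:R) (v * (t%:R - tau%:R)).

Definition collinear (n : nat) (q : 'I_n -> Rpt) : Prop :=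
  exists (a u : Rpt) (lam : 'I_n -> R), forall i, q i = a + lam i *: u.

(* In the collinear case
   with n even, it is the midpoint of the two middle points along the line;
   otherwise it is the (unique) minimizer of the sum of distances. *)
Definition median_sum (n : nat) (q : 'I_n -> Rpt) (x : Rpt) : R :=
  \sum_(i < n) edist x (q i).

Definition collinear_midpoint (n : nat) (q : 'I_n -> Rpt) (x : Rpt) : Prop :=
  exists (a u : Rpt) (lam : 'I_n -> R),
    (forall i, q i = a + lam i *: u) /\
    let s := sort <=%R [seq lam i | i <- enum 'I_n] in
    x = a + ((nth 0 s (n./2).-1 + nth 0 s n./2) / 2) *: u.

Definition is_1median (n : nat) (q : 'I_n -> Rpt) (x : Rpt) : Prop :=
  ((collinear q /\ ~~ odd n) /\ collinear_midpoint q x) \/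
  (~ (collinear q /\ ~~ odd n) /\ forall y, median_sum q x <= median_sum q y).

Definition center_region (n : nat) (v : R) (p : 'I_n -> R -> Rpt)
    (sigma : nat -> 'I_n) (t : nat) : set Rpt :=
  [set x | exists q : 'I_n -> Rpt,
      (forall i, uncertainty v p sigma i t (q i)) /\ is_1median q x].

Definition diam (S : set Rpt) : \bar R :=
  ereal_sup [set (edist x y)%:E | x in S & y in S].

Definition strategy_measure (n : nat) (v : R) (p : 'I_n -> R -> Rpt)
    (sigma : nat -> 'I_n) : \bar R :=
  ereal_sup [set diam (center_region v p sigma t) | t in [set t : nat | (0 < t)%N]].

Definition OPT (n : nat) (v : R) (p : 'I_n -> R -> Rpt) : \bar R :=
  ereal_inf [set strategy_measure v p sigma | sigma in [set: nat -> 'I_n]].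

End Defs.

From Pilot Require Import Defs.
From HB Require Import structures.
From mathcomp Require Import all_boot all_order all_algebra.
From mathcomp Require Import all_classical all_reals all_analysis.
From mathcomp Require Import ring lra.

Import Order.TTheory GRing.Theory Num.Theory.
Set Implicit Arguments.
Unset Strict Implicit.
Unset Printing Implicit Defensive.
Local Open Scope ring_scope.
Local Notation edist := Defs.edist.

(* Place two objects at 0 and two at b, with |b| = M.  At time 1 one object
   has been queried and the other three are still only known up to a ball of
   radius v.  Whichever object is queried, the cluster {0, 0} can be completed
   by the other cluster with one unqueried point pushed off the line through
   0 and b; the four points are then not collinear, and a point holding half
   of the objects minimizes the sum of distances, so 0 is a possible 1-median.
   Symmetrically b is a possible 1-median, hence the center region at time 1
   has diameter >= M for every query strategy, and OPT >= M. *)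

Section Euclid.
Variables (R : realType) (d : nat).
Implicit Types (x y z : Rpt R d) (r : R).

Lemma enorm_ge0 x : 0 <= enorm x.
Proof. exact: sqrtr_ge0. Qed.

Lemma enorm_sqr x : enorm x ^+ 2 = \sum_(i < d) x ord0 i ^+ 2.
Proof. by rewrite sqr_sqrtr // sumr_ge0 // => i _; rewrite sqr_ge0. Qed.

Lemma coord_le_enorm x (c : 'I_d) : `|x ord0 c| <= enorm x.
Proof.
rewrite -ler_sqr ?nnegrE ?enorm_ge0 // real_normK ?num_real // enorm_sqr.
rewrite (bigD1 c) //= lerDl sumr_ge0 // => i _; exact: sqr_ge0.
Qed.

Lemma enorm0 : enorm (0 : Rpt R d) = 0.
Proof. by rewrite /enorm big1 ?sqrtr0 // => i _; rewrite mxE expr0n. Qed.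

Lemma enormN x : enorm (- x) = enorm x.
Proof. by rewrite /enorm; congr Num.sqrt; apply: eq_bigr => i _; rewrite mxE sqrrN. Qed.

(* Cauchy-Schwarz, from 0 <= sum_i (b x_i - a y_i)^2 with a = |x|, b = |y|. *)
Lemma cauchy_schwarz x y : \sum_(i < d) x ord0 i * y ord0 i <= enorm x * enorm y.
Proof.
set S := \sum_(i < d) _; set a := enorm x; set b := enorm y.
have [a0|a_gt0] := eqVneq a 0.
  rewrite a0 mul0r /S big1 // => i _.
  by have := coord_le_enorm x i; rewrite -/a a0 normr_le0 => /eqP ->; rewrite mul0r.
have [b0|b_gt0] := eqVneq b 0.
  rewrite b0 mulr0 /S big1 // => i _.
  by have := coord_le_enorm y i; rewrite -/b b0 normr_le0 => /eqP ->; rewrite mulr0.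
(* With a, b > 0 (a zero norm forces a zero vector), expand the square sum. *)
have expand : \sum_(i < d) (b * x ord0 i - a * y ord0 i) ^+ 2 = 2 * (a * b) * (a * b - S).
  transitivity (b ^+ 2 * \sum_(i < d) x ord0 i ^+ 2 + a ^+ 2 * \sum_(i < d) y ord0 i ^+ 2
                - 2 * (a * b) * S).
    rewrite /S !mulr_sumr -big_split -sumrB /=.
    by apply: eq_bigr => i _; ring.
  by rewrite -!enorm_sqr -/a -/b; ring.
have ab_gt0 : 0 < 2 * (a * b).
  by rewrite !mulr_gt0 // lt0r ?a_gt0 ?b_gt0 ?enorm_ge0.
rewrite -subr_ge0 -(pmulr_rge0 _ ab_gt0) -expand.
by apply: sumr_ge0 => i _; exact: sqr_ge0.
Qed.

(* Minkowski: squaring reduces it to Cauchy-Schwarz. *)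
Lemma enorm_triangle x y : enorm (x + y) <= enorm x + enorm y.
Proof.
rewrite -ler_sqr ?nnegrE ?addr_ge0 ?enorm_ge0 // enorm_sqr.
have -> : \sum_(i < d) (x + y) ord0 i ^+ 2 =
    enorm x ^+ 2 + 2 * \sum_(i < d) x ord0 i * y ord0 i + enorm y ^+ 2.
  rewrite !enorm_sqr mulr_sumr -!big_split /=.
  by apply: eq_bigr => i _; rewrite mxE; ring.
have := cauchy_schwarz x y; lra.
Qed.

Lemma edistxx x : edist x x = 0.
Proof. by rewrite /edist subrr enorm0. Qed.

Lemma edistC x y : edist x y = edist y x.
Proof. by rewrite /edist -enormN opprB. Qed.

Lemma edist_triangle x y z : edist x z <= edist x y + edist y z.
Proof. by rewrite /edist -[x - z](subrKA y); exact: enorm_triangle. Qed.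

Definition axis_vec (c : 'I_d) r : Rpt R d := \row_(j < d) (if j == c then r else 0).

Lemma axis_vecE c r j : axis_vec c r ord0 j = if j == c then r else 0.
Proof. by rewrite mxE. Qed.

Lemma enorm_axis_vec c r : enorm (axis_vec c r) = `|r|.
Proof.
rewrite /enorm (bigD1 c) //= big1 ?addr0 => [|j /negbTE hj].
  by rewrite axis_vecE eqxx sqrtr_sqr.
by rewrite axis_vecE hj expr0n.
Qed.

End Euclid.

Section Configurations.
Variables (R : realType) (d : nat).

(* Each far point costs at most one
   detour through y, paid for by one of the points sitting at x. *)
Lemma median_sum_majority n (q : 'I_n -> Rpt R d) (A : pred 'I_n) (x : Rpt R d) :
  (forall i, A i -> q i = x) -> (#|predC A| <= #|A|)%N ->
  forall y, median_sum q x <= median_sum q y.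
Proof.
move=> qA card_A y; rewrite /median_sum (bigID A) [X in _ <= X](bigID A) /=.
rewrite [X in X + _]big1 ?add0r => [|i /qA ->]; last exact: edistxx.
have near : \sum_(i | A i) edist y (q i) = edist x y *+ #|A|.
  by rewrite -sumr_const; apply: eq_bigr => i /qA ->; rewrite edistC.
have far : \sum_(i | ~~ A i) edist x (q i)
    <= edist x y *+ #|predC A| + \sum_(i | ~~ A i) edist y (q i).
  rewrite -sumr_const -big_split /=.
  by apply: ler_sum => i _; exact: edist_triangle.
apply: le_trans far _; rewrite near lerD2r.
rewrite -[_ *+ #|predC A|]mulr_natr -[_ *+ #|A|]mulr_natr.
by rewrite ler_wpM2l ?ler_nat // /edist enorm_ge0.
Qed.

Lemma not_collinear_witness n (q : 'I_n -> Rpt R d) (i j k : 'I_n) (c : 'I_d) :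
  q j != q i -> (q j - q i) ord0 c = 0 -> (q k - q i) ord0 c != 0 -> ~ collinear q.
Proof.
move=> qji qji_c qki_c [a [u [lam q_line]]].
have diff l m : q l - q m = (lam l - lam m) *: u.
  by rewrite !q_line opprD addrACA subrr add0r scalerBl.
have lam_ji : lam j - lam i != 0.
  by apply: contraNneq qji => lam0; rewrite -subr_eq0 diff lam0 scale0r.
move: qji_c; rewrite diff mxE => /eqP; rewrite mulf_eq0 (negbTE lam_ji) /= => /eqP u_c.
by move: qki_c; rewrite diff mxE u_c mulr0 eqxx.
Qed.

End Configurations.

Section Uncertainty.
Variables (R : realType) (d n : nat) (v : R) (p : 'I_n -> R -> Rpt R d).
Variables (sigma : nat -> 'I_n) (i : 'I_n).

Lemma last_query_le t : (last_query sigma i t <= t)%N.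
Proof. by elim: t => //= t IHt; case: ifP => // _; exact: leqW. Qed.

Lemma last_query_unqueried t :
  (forall s, (0 < s <= t)%N -> sigma s != i) -> last_query sigma i t = 0%N.
Proof.
elim: t => //= t IHt unq; rewrite (negbTE (unq t.+1 _)) ?leqnn //.
by apply: IHt => s /andP[s_gt0 s_le]; apply: unq; rewrite s_gt0 leqW.
Qed.

Hypotheses (v_ge0 : 0 <= v) (p_stat : stationary p).

Lemma uncertainty_stationary t : uncertainty v p sigma i t (p i 0).
Proof.
rewrite /uncertainty /closed_ball_e /= p_stat ?ler0n // edistxx.
by rewrite mulr_ge0 // subr_ge0 ler_nat last_query_le.
Qed.

Lemma uncertainty_unqueried t :
  (forall s, (0 < s <= t)%N -> sigma s != i) ->
  uncertainty v p sigma i t = closed_ball_e (p i 0) (v * t%:R).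
Proof. by move=> unq; rewrite /uncertainty last_query_unqueried // subr0. Qed.

End Uncertainty.

Lemma stationary_speed_bounded (R : realType) d n (v : R) (p : 'I_n -> R -> Rpt R d) :
  0 <= v -> stationary p -> speed_bounded v p.
Proof.
move=> v_ge0 p_stat i s t s_ge0 t_ge0.
by rewrite !p_stat // edistxx mulr_ge0.
Qed.

Section ClusterPerturbation.
(* A nonzero w of norm <= v
   vanishing in the coordinate c where z and x agree moves one unqueried
   object of the second cluster off the line through x and z. *)
Variables (R : realType) (d n : nat) (v : R) (p : 'I_n -> R -> Rpt R d).
Variables (A : pred 'I_n) (x z w : Rpt R d) (c : 'I_d).
Hypotheses (v_ge0 : 0 <= v) (p_stat : stationary p).
Hypothesis p_clusters : forall i, p i 0 = if A i then x else z.
Hypothesis A_half : (#|predC A| <= #|A|)%N.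
Hypotheses (zx : z != x) (zx_c : z ord0 c = x ord0 c).
Hypotheses (w_c : w ord0 c != 0) (w_le : enorm w <= v).

Lemma cluster_in_center_region (sigma : nat -> 'I_n) (a j k : 'I_n) :
  A a -> ~~ A j -> ~~ A k -> j != k -> center_region v p sigma 1%N x.
Proof.
wlog unq_k : j k / sigma 1%N != k => [main Aa Aj Ak jk|Aa Aj Ak jk].
  have [sk|nsk] := eqVneq (sigma 1%N) k; last exact: main nsk Aa Aj Ak jk.
  by apply: (main k j) => //; rewrite ?sk // eq_sym.
pose q i := if A i then x else if i == k then z + w else z.
have qk : q k = z + w by rewrite /q (negbTE Ak) eqxx.
have qj : q j = z by rewrite /q (negbTE Aj) (negbTE jk).
have qa : q a = x by rewrite /q Aa.
exists q; split => [i|].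
  have [-> {i}|ik] := eqVneq i k.
    rewrite qk uncertainty_unqueried => [|s /andP[s_gt0 s_le1]]; last first.
      by have -> : s = 1%N by apply/eqP; rewrite eqn_leq s_le1.
    by rewrite /closed_ball_e /= p_clusters (negbTE Ak) /edist addrC addKr mulr1.
  have -> : q i = p i 0 by rewrite p_clusters /q (negbTE ik); case: (A i).
  exact: uncertainty_stationary.
right; split; last by apply: median_sum_majority A_half => i Ai; rewrite /q Ai.
case=> col _; apply: (not_collinear_witness (i := a) (j := j) (k := k) (c := c)) col.
- by rewrite qj qa.
- by rewrite qj qa !mxE zx_c subrr.
- by rewrite qk qa !mxE zx_c addrAC subrr add0r.
Qed.

End ClusterPerturbation.

Section LowerBound.
Variables (R : realType) (d : nat).

Lemma diam_ge (S : set (Rpt R d)) x y : S x -> S y -> ((edist x y)%:E <= diam S)%E.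
Proof. by move=> Sx Sy; apply: ereal_sup_ubound; exists x => //; exists y. Qed.

Lemma OPT_ge n (v : R) (p : 'I_n -> R -> Rpt R d) (a : \bar R) :
  (forall sigma, exists2 t, (0 < t)%N & (a <= diam (center_region v p sigma t))%E) ->
  (a <= OPT v p)%E.
Proof.
move=> big_region; apply/ereal_infP => _ [sigma _ <-].
have [t t_gt0 a_le] := big_region sigma.
by apply: le_trans a_le _; apply: ereal_sup_ubound; exists t.
Qed.

End LowerBound.

Lemma card_ord_lt n m : (m <= n)%N -> #|[pred i : 'I_n | (i < m)%N]| = m.
Proof.
move=> le_mn; rewrite -sum1_card -(big_mkord (fun i => i < m)%N (fun _ => 1%N)).
have := big_nat_widen 0 m n xpredT (fun _ => 1%N) le_mn; rewrite /= => <-.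
by rewrite sum_nat_const_nat subn0 muln1.
Qed.

Theorem proposition6 (R : realType) (d : nat) (hd : (2 <= d)%N)
    (v : R) (hv : 0 < v) (M : R) (hM : 0 < M) :
  exists p : 'I_4 -> R -> Rpt R d,
    speed_bounded v p /\ stationary p /\ (M%:E <= OPT v p)%E.
Proof.
pose c0 : 'I_d := Ordinal (ltnW hd); pose c1 : 'I_d := Ordinal hd.
pose b := axis_vec c0 M; pose w := axis_vec c1 v.
pose A := [pred i : 'I_4 | (i < 2)%N].
pose p (i : 'I_4) (_ : R) := if A i then 0 else b.
have p_stat : stationary p by [].
have b0 : b != 0 by apply/eqP => /rowP/(_ c0); rewrite !mxE eqxx => /eqP; rewrite gt_eqF.
have b_c1 : b ord0 c1 = (0 : Rpt R d) ord0 c1 by rewrite !mxE.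
have w_c1 : w ord0 c1 != 0 by rewrite axis_vecE eqxx gt_eqF.
have w_le : enorm w <= v by rewrite enorm_axis_vec gtr0_norm.
have card_A : #|A| = 2 by exact: card_ord_lt.
have card_AC : #|predC A| = 2 by apply/eqP; rewrite -(eqn_add2l #|A|) cardC card_ord card_A.
exists p; split; [exact: stationary_speed_bounded (ltW hv) p_stat|split => //].
apply: OPT_ge => sigma; exists 1%N => //.
have in0 : center_region v p sigma 1%N 0.
  apply: (@cluster_in_center_region _ _ _ _ _ A 0 b w c1 (ltW hv) p_stat _ _ b0 b_c1
    w_c1 w_le _ (@Ordinal 4 0 isT) (@Ordinal 4 2 isT) (@Ordinal 4 3 isT)) => //.
  by rewrite card_A card_AC.
have inb : center_region v p sigma 1%N b.
  apply: (@cluster_in_center_region _ _ _ _ _ (predC A) b 0 w c1 (ltW hv) p_stat _ _ _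
    (esym b_c1) w_c1 w_le _ (@Ordinal 4 2 isT) (@Ordinal 4 0 isT) (@Ordinal 4 1 isT)) => //.
  - by move=> i; rewrite /p /=; case: ltnP.
  - by rewrite (eq_card (B := A)) ?card_A ?card_AC // => i; rewrite !inE negbK.
  - by rewrite eq_sym.
apply: le_trans (diam_ge in0 inb).
by rewrite /edist sub0r enormN enorm_axis_vec gtr0_norm.
Qed.
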